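(* Let $\Sigma$ be an alphabet with $|\Sigma|\ge 3$, let $f,g\colon\Sigma^*\to\Sigma^*$, and suppose $f$ is RCP and either there is a letter $a\in\Sigma$ with $f(x)=a\,g(x)$ for all $x\in\Sigma^*$, or $f(x)=x\,g(x)$ for all $x\in\Sigma^*$. Then $g$ is RCP.
   Context: $\Sigma^*$ is the free monoid over $\Sigma$ (finite words, concatenation, empty word $\varepsilon$). A function $f\colon(\Sigma^* )^k\to\Sigma^*$ is RCP if for every monoid morphism $\varphi\colon\Sigma^*\to\Sigma^*$ and all $u_1,\ldots,u_k,v_1,\ldots,v_k$ with $\varphi(u_i)=\varphi(v_i)$ for all $i$, we have $\varphi(f(u_1,\ldots,u_k))=\varphi(f(v_1,\ldots,v_k))$. *)

From mathcomp Require Import all_boot.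
Set Implicit Arguments. Unset Strict Implicit. Unset Printing Implicit Defensive.

(* Words over an alphabet S: the free monoid S^* is seq S with concatenation
   (++) and empty word [::]. *)

Definition monoid_morphism (S : Type) (phi : seq S -> seq S) : Prop :=
  phi [::] = [::] /\ forall u v : seq S, phi (u ++ v) = phi u ++ phi v.

Definition RCP1 (S : Type) (f : seq S -> seq S) : Prop :=
  forall phi : seq S -> seq S, monoid_morphism phi ->
  forall u v : seq S, phi u = phi v -> phi (f u) = phi (f v).

From Pilot Require Import Defs.
From mathcomp Require Import all_boot.

(* If [f x = h x ++ g x] and the prefix [h] is compatible with every morphism
   [phi], then [phi (f u) = phi (f v)] splits as [phi (h u) ++ phi (g u)] against
   [phi (h v) ++ phi (g v)] with equal prefixes, which cancel in the free monoid.
   A constant letter and the identity are such prefixes. *)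

Lemma catIl (T : Type) (p : seq T) : injective (cat p).
Proof. by elim: p => //= c p IHp x y [/IHp]. Qed.

Lemma RCP1_cat_prefix (S : Type) (f g h : seq S -> seq S) :
  (forall x : seq S, f x = h x ++ g x) ->
  (* qualified: all_boot exports an unrelated [monoid_morphism] *)
  (forall phi : seq S -> seq S, Defs.monoid_morphism phi ->
     forall u v, phi u = phi v -> phi (h u) = phi (h v)) ->
  RCP1 f -> RCP1 g.
Proof.
move=> def_f h_compat f_rcp phi phi_morph u v phi_uv.
have := f_rcp phi phi_morph u v phi_uv.
have phi_h := h_compat phi phi_morph u v phi_uv.
case: phi_morph => _ phi_cat.
by rewrite !def_f !phi_cat phi_h; apply: catIl.
Qed.

Theorem mainTheorem11 (S : finType) (f g : seq S -> seq S) :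
  3 <= #|S| ->
  RCP1 f ->
  ((exists a : S, forall x : seq S, f x = a :: g x) \/
   (forall x : seq S, f x = x ++ g x)) ->
  RCP1 g.
Proof.
move=> _ f_rcp [[a def_f] | def_f].
- by apply: (@RCP1_cat_prefix S f g (fun=> [:: a])) f_rcp.
- exact: (@RCP1_cat_prefix S f g id) f_rcp.
Qed.
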